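(* Let $R$ be a reduced root system and let $W$ be its Weyl group. Let $(t_1,\ldots,t_n)$ be an $n$-tuple of reflections in $W$ with $t_1t_2\cdots t_n=1$. Then $(t_1,\ldots,t_n)$ is braid-equivalent to an $n$-tuple $(t'_1,\ldots,t'_n)$ of reflections with $t'_1t'_2\cdots t'_n=1$ and $t'_1=t'_2$.
   Context: For a group $G$, an elementary transformation (braid move) of an $n$-tuple $(t_1,\ldots,t_n)\in G^n$ is, for some $1\leq i\leq n-1$, either the replacement of $(t_i,t_{i+1})$ by $(t_it_{i+1}t_i^{-1},t_i)$ or by $(t_{i+1},t_{i+1}^{-1}t_it_{i+1})$, leaving the other entries unchanged. Two $n$-tuples are braid-equivalent if one is obtained from the other by a finite sequence of elementary transformations. *)

From HB Require Import structures.
From mathcomp Require Import all_boot all_order all_algebra.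
From mathcomp Require Import reals.
From Stdlib Require Import Relation_Operators.
Set Implicit Arguments. Unset Strict Implicit. Unset Printing Implicit Defensive.
Import Order.TTheory GRing.Theory Num.Theory.
Local Open Scope ring_scope.

Definition dot (R : realType) (d : nat) (x y : 'rV[R]_d) : R := (x *m y^T) 0 0.

(* Orthogonal reflection s_a : x |-> x - 2 (x,a)/(a,a) a, as a matrix acting
   on row vectors by right multiplication (x |-> x *m refl_mx a). *)
Definition refl_mx (R : realType) (d : nat) (a : 'rV[R]_d) : 'M[R]_d :=
  1%:M - (2 / dot a a) *: (a^T *m a).

Definition reduced_root_system (R : realType) (d : nat) (rs : seq 'rV[R]_d) : Prop :=
  [/\ uniq rs, 0 \notin rs &
      (forall v : 'rV[R]_d, exists c : 'I_(size rs) -> R,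
          v = \sum_(i < size rs) c i *: rs`_i)] /\
  [/\
      (forall a b, a \in rs -> b \in rs -> b *m refl_mx a \in rs),
      (forall a b, a \in rs -> b \in rs -> 2 * dot b a / dot a a \is a Num.int)
    & (forall a (c : R), a \in rs -> c *: a \in rs -> c = 1 \/ c = -1)].

Inductive in_weyl (R : realType) (d : nat) (rs : seq 'rV[R]_d) : 'M[R]_d -> Prop :=
  | weyl1 : in_weyl rs 1%:M
  | weyl_refl a (t : 'M[R]_d) : a \in rs -> in_weyl rs t -> in_weyl rs (refl_mx a *m t).

Definition weyl_reflection (R : realType) (d : nat) (rs : seq 'rV[R]_d) (t : 'M[R]_d) : Prop :=
  exists2 a, a \in rs & t = refl_mx a.

Definition mprod (R : realType) (d : nat) (s : seq 'M[R]_d) : 'M[R]_d :=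
  foldr mulmx 1%:M s.

Inductive braid_step (G : Type) (mul : G -> G -> G) (inv : G -> G) :
    seq G -> seq G -> Prop :=
  | braid_l (p q : seq G) (a b : G) :
      braid_step mul inv (p ++ a :: b :: q) (p ++ mul (mul a b) (inv a) :: a :: q)
  | braid_r (p q : seq G) (a b : G) :
      braid_step mul inv (p ++ a :: b :: q) (p ++ b :: mul (mul (inv b) a) b :: q).

Definition braid_equiv (G : Type) (mul : G -> G -> G) (inv : G -> G) (s t : seq G) : Prop :=
  clos_refl_trans_1n (seq G) (braid_step mul inv) s t.

Definition weyl_braid_equiv (R : realType) (d : nat) (s t : seq 'M[R]_d) : Prop :=
  braid_equiv (@mulmx R d d d) (@invmx R d) s t.

From HB Require Import structures.
From mathcomp Require Import all_boot all_order all_algebra.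
From mathcomp Require Import reals.
From mathcomp Require Import ring lra.
From Stdlib Require Import Relation_Operators.
Import Order.TTheory GRing.Theory Num.Theory.
Local Open Scope ring_scope.
Set Implicit Arguments. Unset Strict Implicit.

(* Fix f orthogonal to no root, call a root positive when it pairs positively
   with f, and rank the reflections by the normalised height f.a / |a| of their
   positive roots.  Induct on the lexicographic rank sequence of the tuple.
   Since f - f t_1...t_n = 0 cannot be a sum of positive multiples of positive
   roots, some prefix t_1...t_i turns the positive root of t_(i+1) negative.
   Sliding t_(i+1) leftwards with braid moves, it becomes a reflection s_x next
   to the reflection s_c at which the sign changes.  A braid move on (s_c, s_x)
   puts s_x or s_(x s_c) in the place of s_c, lowering the rank sequence, unless
   c is at most as high as x and -(x s_c); then Cauchy-Schwarz forces x = c,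
   i.e. an adjacent repeated reflection, which braid moves carry to the front. *)

Section SeqPred.
Variables (T : eqType) (P : T -> Prop).

Lemma forall_in_cat (p q : seq T) :
  {in p ++ q, forall t, P t} <-> {in p, forall t, P t} /\ {in q, forall t, P t}.
Proof.
split=> [Hpq | [Hp Hq] t]; last by rewrite mem_cat => /orP[/Hp | /Hq].
by split=> t Ht; apply: Hpq; rewrite mem_cat Ht ?orbT.
Qed.

Lemma forall_in_cons (x : T) (q : seq T) :
  {in x :: q, forall t, P t} <-> P x /\ {in q, forall t, P t}.
Proof.
rewrite -cat1s forall_in_cat; split=> [[Px Pq] | [Px Pq]]; split=> //.
  exact/Px/mem_head.
by move=> t /[!inE] /eqP->.
Qed.

End SeqPred.

Lemma foldr_sign_change (T A : Type) (P : pred A) (g : T -> A -> A) w s :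
  P w -> ~~ P (foldr g w s) ->
  exists p t m, [/\ s = p ++ t :: m, P (foldr g w m) & ~~ P (g t (foldr g w m))].
Proof.
move=> Pw; elim: s => [|t s IH] /=; first by rewrite Pw.
case: (boolP (P (foldr g w s))) => [Ps nPts | nPs _]; first by exists [::], t, s.
by have [p [t' [m [-> *]]]] := IH nPs; exists (t :: p), t', m.
Qed.

Lemma count_lt_sub (T : eqType) (P1 P2 : pred T) (s : seq T) y :
  subpred P1 P2 -> y \in s -> P2 y -> ~~ P1 y -> (count P1 s < count P2 s)%N.
Proof.
move=> sub12; elim: s => // x s IH /[!inE] /orP[/eqP<- | ys] P2y nP1y /=.
  by rewrite (negbTE nP1y) P2y ltnS sub_count.
have := IH ys P2y nP1y; case: (boolP (P1 x)) => [/sub12 -> | _] /=.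
  by rewrite ltn_add2l.
by move/leq_trans; apply; rewrite leq_addl.
Qed.

Lemma invmx_involutive (R : comUnitRingType) n (t : 'M[R]_n) :
  t *m t = 1%:M -> invmx t = t.
Proof.
move=> tt; have [t_unit _] := mulmx1_unit tt.
by rewrite -[invmx t]mulmx1 -tt mulmxA mulVmx ?mul1mx.
Qed.

Section EuclideanReflections.
Variables (R : realType) (d : nat).
Implicit Types (a b v x y : 'rV[R]_d) (M : 'M[R]_d).

Lemma dotE x y : dot x y = \sum_i x 0 i * y 0 i.
Proof. by rewrite /dot !mxE; apply: eq_bigr => i _; rewrite mxE. Qed.

Lemma dotC x y : dot x y = dot y x.
Proof. by rewrite !dotE; apply: eq_bigr => i _; rewrite mulrC. Qed.

Lemma dotDl x y v : dot (x + y) v = dot x v + dot y v.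
Proof. by rewrite !dotE -big_split; apply: eq_bigr => i _; rewrite mxE mulrDl. Qed.

Lemma dotZl (c : R) x v : dot (c *: x) v = c * dot x v.
Proof. by rewrite !dotE mulr_sumr; apply: eq_bigr => i _; rewrite mxE mulrA. Qed.

Lemma dotNl x v : dot (- x) v = - dot x v.
Proof. by rewrite -scaleN1r dotZl mulN1r. Qed.

Lemma dotBl x y v : dot (x - y) v = dot x v - dot y v.
Proof. by rewrite dotDl dotNl. Qed.

Lemma dotDr x y v : dot v (x + y) = dot v x + dot v y.
Proof. by rewrite dotC dotDl !(dotC v). Qed.

Lemma dotZr (c : R) x v : dot v (c *: x) = c * dot v x.
Proof. by rewrite dotC dotZl dotC. Qed.

Lemma dotNr x v : dot v (- x) = - dot v x.
Proof. by rewrite dotC dotNl dotC. Qed.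

Lemma dotBr x y v : dot v (x - y) = dot v x - dot v y.
Proof. by rewrite dotDr dotNr. Qed.

Lemma dot0l v : dot 0 v = 0.
Proof. by rewrite -(scale0r 0) dotZl mul0r. Qed.

Lemma dot_ge0 x : 0 <= dot x x.
Proof. by rewrite dotE sumr_ge0 // => i _; rewrite -expr2 sqr_ge0. Qed.

Lemma dot_eq0 x : (dot x x == 0) = (x == 0).
Proof.
apply/idP/eqP => [|->]; last by rewrite dot0l.
rewrite dotE psumr_eq0 => [/allP x0 | i _]; last by rewrite -expr2 sqr_ge0.
apply/rowP => i; rewrite mxE.
by have /(_ (mem_index_enum i)) := x0 i; rewrite mulf_eq0 orbb => /eqP.
Qed.

Lemma dot_gt0 x : (0 < dot x x) = (x != 0).
Proof. by rewrite lt_def dot_ge0 dot_eq0 andbT. Qed.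

Lemma dot_mulmx x y M : dot (x *m M) y = dot x (y *m M^T).
Proof. by rewrite /dot trmx_mul trmxK mulmxA. Qed.

Lemma cauchy_schwarz_eq x b : b != 0 ->
  dot x x * dot b b <= dot x b ^+ 2 -> x = (dot x b / dot b b) *: b.
Proof.
rewrite -dot_gt0 => b_gt0 CS; set c := dot x b / dot b b.
have E : dot (x - c *: b) (x - c *: b) * dot b b = dot x x * dot b b - dot x b ^+ 2.
  by rewrite !(dotBl, dotBr, dotZl, dotZr) (dotC b x) /c; field; rewrite gt_eqF.
have : dot (x - c *: b) (x - c *: b) * dot b b <= 0 by rewrite E subr_le0.
by rewrite pmulr_lle0 // le_eqVlt ltNge dot_ge0 orbF dot_eq0 subr_eq0 => /eqP.
Qed.

Lemma refl_mxE a v : v *m refl_mx a = v - (2 / dot a a * dot v a) *: a.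
Proof.
rewrite /refl_mx mulmxBr mulmx1 -scalemxAr mulmxA.
by rewrite [v *m a^T]mx11_scalar mul_scalar_mx scalerA [_ * (v *m a^T) 0 0]mulrC.
Qed.

Lemma tr_refl_mx a : (refl_mx a)^T = refl_mx a.
Proof. by rewrite /refl_mx linearB /= trmx1 linearZ /= trmx_mul trmxK. Qed.

Lemma refl_mxN a : refl_mx (- a) = refl_mx a.
Proof.
have trN : (- a)^T = - a^T by apply/matrixP => i j; rewrite !mxE.
by rewrite /refl_mx dotNl dotNr opprK trN mulNmx mulmxN opprK.
Qed.

Lemma dot_refl_mx a x y : dot (x *m refl_mx a) y = dot x (y *m refl_mx a).
Proof. by rewrite dot_mulmx tr_refl_mx. Qed.

Lemma row_mx_ext M M' : (forall v, v *m M = v *m M') -> M = M'.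
Proof. by move=> eqMM'; apply/row_matrixP => i; rewrite !rowE. Qed.

Section NonzeroVector.
Variable a : 'rV[R]_d.
Hypothesis a_neq0 : a != 0.

Let aa_neq0 : dot a a != 0. Proof. by rewrite dot_eq0. Qed.

Lemma refl_mx_self : a *m refl_mx a = - a.
Proof. by rewrite refl_mxE mulfVK // scaler_nat mulr2n opprD addNKr. Qed.

Lemma refl_mxK : refl_mx a *m refl_mx a = 1%:M.
Proof.
apply: row_mx_ext => v; rewrite mulmx1 mulmxA !refl_mxE dotBl dotZl.
rewrite -addrA -opprD -scalerDl.
have -> : 2 / dot a a * dot v a + 2 / dot a a * (dot v a - 2 / dot a a * dot v a * dot a a) = 0.
  by field.
by rewrite scale0r subr0.
Qed.

Lemma dot_refl_mx2 x y : dot (x *m refl_mx a) (y *m refl_mx a) = dot x y.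
Proof. by rewrite dot_refl_mx -mulmxA refl_mxK mulmx1. Qed.

Lemma refl_mx_conj b : refl_mx a *m refl_mx b *m refl_mx a = refl_mx (b *m refl_mx a).
Proof.
apply: row_mx_ext => v.
rewrite !mulmxA [v *m refl_mx a *m _]refl_mxE mulmxBl -scalemxAl -mulmxA refl_mxK mulmx1.
by rewrite [RHS]refl_mxE dot_refl_mx2 dot_refl_mx.
Qed.

Lemma refl_mx_eq b : refl_mx a = refl_mx b -> a = (dot a b / dot b b) *: b.
Proof.
move=> sab; have := refl_mx_self; rewrite sab refl_mxE => sa.
apply: (@scalerI _ _ 2); first by rewrite pnatr_eq0.
have -> : 2 *: a = (2 / dot b b * dot a b) *: b.
  by rewrite scaler_nat mulr2n -[X in X + _]opprK -sa opprB subrK.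
by rewrite scalerA; congr (_ *: _); ring.
Qed.

End NonzeroVector.

End EuclideanReflections.

Section Height.
Variables (R : realType) (d : nat) (f : 'rV[R]_d).

Definition height (a : 'rV[R]_d) := dot f a / Num.sqrt (dot a a).

Lemma height_refl_cs x b : x != 0 -> b != 0 -> 0 < dot f b ->
  height b <= height x -> height b <= height (- (x *m refl_mx b)) ->
  dot x x * dot b b <= dot x b ^+ 2.
Proof.
move=> x0 b0 fb hx hz.
rewrite -ler_sqrt ?sqr_ge0 // sqrtr_sqr sqrtrM ?dot_ge0 //; apply: le_trans (ler_norm _).
have hz' : height (- (x *m refl_mx b)) =
    (2 / dot b b * dot x b * dot f b - dot f x) / Num.sqrt (dot x x).
  by rewrite /height dotNl !dotNr opprK dot_refl_mx2 // refl_mxE dotBr dotZr opprB.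
move: (lerD hx hz); rewrite hz' /height.
set sX := Num.sqrt (dot x x); set sB := Num.sqrt (dot b b).
rewrite -[dot b b](sqr_sqrtr (dot_ge0 b)) -/sB.
have sX0 : 0 < sX by rewrite sqrtr_gt0 dot_gt0.
have sB0 : 0 < sB by rewrite sqrtr_gt0 dot_gt0.
set p := dot f b; set q := dot f x; set e := dot x b; set c := 2 * p / (sB * sX).
have c0 : 0 < c by rewrite divr_gt0 ?mulr_gt0.
have -> : p / sB + p / sB = c * sX by rewrite /c; field; rewrite !gt_eqF.
have -> : q / sX + (2 / sB ^+ 2 * e * p - q) / sX = c * (e / sB).
  by rewrite /c; field; rewrite !gt_eqF.
by rewrite ler_pM2l // ler_pdivlMr.
Qed.

End Height.

Lemma exists_notin (R : numDomainType) (L : seq R) : exists e, e \notin L.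
Proof.
set S := \sum_(x <- L) `|x|; exists (1 + S); apply/negP => eL.
have : `|1 + S| <= S by rewrite [leRHS](big_rem _ eL) lerDl sumr_ge0.
by rewrite ger0_norm ?addr_ge0 ?sumr_ge0 // gerDr ler10.
Qed.

Lemma exists_nonorthogonal (R : realType) d (vs : seq 'rV[R]_d) :
  0 \notin vs -> exists f : 'rV[R]_d, {in vs, forall v, dot f v != 0}.
Proof.
elim: vs => [|r vs IH]; first by exists 0.
rewrite inE negb_or eq_sym => /andP[r_neq0 /IH[f0 f0_vs]].
have [e] := exists_notin (0 :: [seq - dot f0 v / dot r v | v <- vs]).
rewrite inE negb_or => /andP[e_neq0 e_vs].
case: (eqVneq (dot f0 r) 0) => [f0r | f0r]; last first.
  by exists f0 => v /[!inE] /orP[/eqP-> | /f0_vs].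
exists (f0 + e *: r) => v /[!inE] /orP[/eqP-> | v_vs]; rewrite dotDl dotZl.
  by rewrite f0r add0r mulf_neq0 // dot_eq0.
case: (eqVneq (dot r v) 0) => [-> | rv]; first by rewrite mulr0 addr0 f0_vs.
apply: contra e_vs => /eqP E; apply/mapP; exists v => //.
by apply: (mulIf rv); rewrite mulfVK //; apply/eqP; rewrite -addr_eq0 addrC E.
Qed.

Section Braids.
Variables (G : Type) (mul : G -> G -> G) (inv : G -> G).

Lemma braid_equiv_refl s : braid_equiv mul inv s s.
Proof. exact: rt1n_refl. Qed.

Lemma braid_equiv_trans s t u :
  braid_equiv mul inv s t -> braid_equiv mul inv t u -> braid_equiv mul inv s u.
Proof.
elim=> // x y z xy _ IH zu.
exact: rt1n_trans xy (IH zu).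
Qed.

Lemma braid_step_equiv s t : braid_step mul inv s t -> braid_equiv mul inv s t.
Proof. by move=> st; apply: rt1n_trans st (rt1n_refl _ _ _). Qed.

Lemma braid_equiv_size s t : braid_equiv mul inv s t -> size t = size s.
Proof. by elim=> // x y z [] p q a b _ ->; rewrite !size_cat. Qed.

End Braids.

Section LexCode.
Variables (T : Type) (N : nat) (r : T -> nat).

Definition lexcode (acc : nat) (s : seq T) := foldl (fun m t => m * N + r t)%N acc s.

Lemma lexcodeE acc s : lexcode acc s = (acc * N ^ size s + lexcode 0 s)%N.
Proof.
elim: s acc => [|t s IH] acc; first by rewrite muln1 addn0.
by rewrite /= IH [lexcode (0 * N + r t) s]IH expnS mulnDl mulnA addnA.
Qed.

Hypothesis r_lt : forall t, (r t < N)%N.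

Lemma lexcode_lt s : (lexcode 0 s < N ^ size s)%N.
Proof.
elim/last_ind: s => [|s t IH]; first by rewrite expn0.
rewrite /lexcode -cats1 foldl_cat size_cat addn1 expnS mulnC /=.
apply: leq_trans (_ : (lexcode 0 s).+1 * N <= _)%N; last by rewrite leq_mul2r IH orbT.
by rewrite mulSn addnC ltn_add2r.
Qed.

Lemma lexcode_ltl p a b q1 q2 : size q1 = size q2 -> (r a < r b)%N ->
  (lexcode 0 (p ++ a :: q1) < lexcode 0 (p ++ b :: q2))%N.
Proof.
move=> sz ab; rewrite /lexcode !foldl_cat /=.
rewrite -/(lexcode _ q1) -/(lexcode _ q2) -/(lexcode 0 p) (lexcodeE _ q1) (lexcodeE _ q2) -sz.
apply: leq_trans (_ : (lexcode 0 p * N + r a).+1 * N ^ size q1 <= _)%N.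
  by rewrite mulSn addnC ltn_add2r lexcode_lt.
by apply: leq_trans (leq_addr _ _); rewrite leq_mul2r -addnS leq_add2l ab orbT.
Qed.

End LexCode.

Section WeylBraids.
Variables (R : realType) (d : nat).
Implicit Types (s p q m : seq 'M[R]_d) (t x : 'M[R]_d).

Lemma mprod_cat p q : mprod (p ++ q) = mprod p *m mprod q.
Proof. by elim: p => [|x p IH] /=; rewrite /mprod /= ?mul1mx // -mulmxA -IH. Qed.

Lemma weyl_braid_l p q x t :
  weyl_braid_equiv (p ++ x :: t :: q) (p ++ x *m t *m invmx x :: x :: q).
Proof. exact/braid_step_equiv/braid_l. Qed.

Lemma weyl_braid_r p q x t :
  weyl_braid_equiv (p ++ x :: t :: q) (p ++ t :: invmx t *m x *m t :: q).
Proof. exact/braid_step_equiv/braid_r. Qed.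

Lemma weyl_braid_pair_left p1 p2 q t : t *m t = 1%:M ->
  weyl_braid_equiv (p1 ++ p2 ++ t :: t :: q) (p1 ++ t :: t :: p2 ++ q).
Proof.
move=> tt; have invt := invmx_involutive tt.
elim: p2 p1 => [|x p2 IH] p1 /=; first exact: braid_equiv_refl.
apply: braid_equiv_trans (_ : weyl_braid_equiv _ (p1 ++ x :: t :: t :: p2 ++ q)) _.
  by have := IH (rcons p1 x); rewrite -cats1 -!catA.
apply: braid_equiv_trans (weyl_braid_r _ _ _ _) _; rewrite invt.
have -> : forall u, p1 ++ t :: u = rcons p1 t ++ u by move=> u; rewrite -cats1 -catA.
apply: braid_equiv_trans (weyl_braid_r _ _ _ _) _.
by rewrite invt -!mulmxA tt mulmx1 mulmxA tt mul1mx -cats1 -catA; apply: braid_equiv_refl.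
Qed.

(* [ract m v = v *m mprod (rev m)]; for products of symmetric matrices it is
   the adjoint action: [dot (v *m mprod m) w = dot v (ract m w)]. *)
Definition ract m (v : 'rV[R]_d) := foldr (fun t w => w *m t) v m.

Section RootSystem.
Variable rs : seq 'rV[R]_d.
Hypothesis rs_neq0 : 0 \notin rs.
Hypothesis rs_refl : forall a b, a \in rs -> b \in rs -> b *m refl_mx a \in rs.
Hypothesis rs_reduced : forall a (c : R), a \in rs -> c *: a \in rs -> c = 1 \/ c = -1.

Local Notation reflections s := {in s, forall t, weyl_reflection rs t}.

Lemma root_neq0 a : a \in rs -> a != 0.
Proof. by apply: contraTneq => ->. Qed.

Lemma rootN a : a \in rs -> - a \in rs.
Proof. by move=> aR; rewrite -(refl_mx_self (root_neq0 aR)); apply: rs_refl. Qed.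

Lemma weyl_reflectionK t : weyl_reflection rs t -> t *m t = 1%:M.
Proof. by case=> a /root_neq0 a_neq0 ->; apply: refl_mxK. Qed.

Lemma weyl_reflection_conj x t :
  weyl_reflection rs x -> weyl_reflection rs t -> weyl_reflection rs (x *m t *m x).
Proof.
case=> a aR -> [b bR ->]; rewrite refl_mx_conj ?root_neq0 //.
by exists (b *m refl_mx a); first exact: rs_refl.
Qed.

Lemma weyl_braid_step_reflections s s' :
  braid_step (@mulmx R d d d) (@invmx R d) s s' -> reflections s ->
  reflections s' /\ mprod s' = mprod s.
Proof.
case=> p q x t;
  move=> /forall_in_cat[p_refl /forall_in_cons[x_refl /forall_in_cons[t_refl q_refl]]].
- have xx := weyl_reflectionK x_refl; rewrite (invmx_involutive xx) !mprod_cat; split.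
    apply/forall_in_cat; split=> //; apply/forall_in_cons; split.
      exact: weyl_reflection_conj.
    exact/forall_in_cons.
  by congr (_ *m _); rewrite /mprod /= mulmxA -(mulmxA _ x x) xx mulmx1 mulmxA.
- have tt := weyl_reflectionK t_refl; rewrite (invmx_involutive tt) !mprod_cat; split.
    apply/forall_in_cat; split=> //; apply/forall_in_cons; split=> //.
    by apply/forall_in_cons; split=> //; apply: weyl_reflection_conj.
  by congr (_ *m _); rewrite /mprod /= !mulmxA tt mul1mx.
Qed.

Lemma weyl_braid_reflections s s' : weyl_braid_equiv s s' -> reflections s ->
  reflections s' /\ mprod s' = mprod s.
Proof.
elim=> // x y z /weyl_braid_step_reflections xy _ IH /xy[y_refl <-].
exact: IH.
Qed.

Lemma ract_root m v : reflections m -> v \in rs -> ract m v \in rs.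
Proof.
elim: m => //= t m IH /forall_in_cons[[a aR ->] m_refl] vR.
exact/rs_refl/IH.
Qed.

Lemma weyl_braid_slide p m q b : b \in rs -> reflections m ->
  weyl_braid_equiv (p ++ m ++ refl_mx b :: q) (p ++ refl_mx (ract m b) :: m ++ q).
Proof.
move=> bR; elim: m p => [|x m IH] p m_refl /=; first exact: braid_equiv_refl.
move/forall_in_cons: m_refl => [[a aR ->] m_refl].
pose s := p ++ refl_mx a :: refl_mx (ract m b) :: m ++ q.
apply: braid_equiv_trans (_ : weyl_braid_equiv _ s) _.
  by have := IH (rcons p (refl_mx a)) m_refl; rewrite -cats1 -!catA.
apply: braid_equiv_trans (weyl_braid_l _ _ _ _) _.
by rewrite invmx_involutive (refl_mxK, refl_mx_conj) ?root_neq0 //; apply: braid_equiv_refl.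
Qed.

Lemma pos_root_parallel (f : 'rV[R]_d) a b (c : R) : a \in rs -> b \in rs ->
  0 < dot f a -> 0 < dot f b -> a = c *: b -> a = b.
Proof.
move=> aR bR fa fb a_cb; have cbR : c *: b \in rs by rewrite -a_cb.
have [c1 | cN1] := rs_reduced bR cbR.
  by rewrite a_cb c1 scale1r.
by move: fa; rewrite a_cb cN1 scaleN1r dotNr oppr_gt0 ltNge ltW.
Qed.

Section PositiveRoots.
Variable f : 'rV[R]_d.
Hypothesis f_generic : {in rs, forall a, dot f a != 0}.

Definition pos_root t := nth 0 rs (find (fun a => (0 < dot f a) && (refl_mx a == t)) rs).

Lemma pos_rootP t : weyl_reflection rs t ->
  [/\ pos_root t \in rs, 0 < dot f (pos_root t) & t = refl_mx (pos_root t)].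
Proof.
case=> a aR ->; rewrite /pos_root.
set P := (X in find X rs); have hasP : has P rs.
  apply/hasP; case: (ltgtP 0 (dot f a)) => [fa | fa | fa].
  - by exists a; rewrite // /P /= fa eqxx.
  - by exists (- a); rewrite ?rootN // /P /= dotNr oppr_gt0 fa refl_mxN eqxx.
  - by move: (f_generic aR); rewrite -fa eqxx.
have /andP[fr /eqP <-] := nth_find 0 hasP.
by split=> //; rewrite mem_nth // -has_find.
Qed.

Lemma pos_root_refl a : a \in rs -> 0 < dot f a -> pos_root (refl_mx a) = a.
Proof.
move=> aR fa; have [rR fr sr] := pos_rootP (ex_intro2 _ _ a aR erefl).
exact: pos_root_parallel rR aR fr fa (refl_mx_eq (root_neq0 rR) (esym sr)).
Qed.

Definition rank t :=
  count (fun a => (0 < dot f a) && (height f a < height f (pos_root t))) rs.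

Lemma rank_lt t t' : weyl_reflection rs t ->
  height f (pos_root t) < height f (pos_root t') -> (rank t < rank t')%N.
Proof.
move=> /pos_rootP[rR fr _] lt; apply: (count_lt_sub (y := pos_root t)) => //.
- by move=> a /andP[-> /lt_trans ->].
- by rewrite fr lt.
- by rewrite ltxx andbF.
Qed.

Lemma rank_lt_size t : (rank t < (size rs).+1)%N.
Proof. by rewrite ltnS count_size. Qed.

Lemma height_refl_eq (b x : 'rV[R]_d) : b \in rs -> x \in rs -> 0 < dot f b -> 0 < dot f x ->
  height f b <= height f x -> height f b <= height f (- (x *m refl_mx b)) -> x = b.
Proof.
move=> bR xR fb fx hx hz.
have cs := height_refl_cs (root_neq0 xR) (root_neq0 bR) fb hx hz.
exact: pos_root_parallel xR bR fx fb (cauchy_schwarz_eq (root_neq0 bR) cs).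
Qed.

Definition rank_code s := lexcode (size rs).+1 rank 0 s.

Lemma nonpositive_prefix v s : reflections s -> s != [::] ->
  dot (v - v *m mprod s) f <= 0 ->
  exists p t q, s = p ++ t :: q /\ dot v (ract p (pos_root t)) <= 0.
Proof.
elim: s v => [//|t s IH] v /forall_in_cons[t_refl s_refl] _.
have [bR fb tE] := pos_rootP t_refl.
have [vb | vb] := leP (dot v (pos_root t)) 0; first by exists [::], t, s.
(* [v - v *m t] is a positive multiple of the positive root of [t]. *)
have vt_pos : 0 < dot (v - v *m t) f.
  rewrite [in v *m t]tE refl_mxE opprB addrC subrK dotZl dotC.
  by rewrite !mulr_gt0 ?invr_gt0 ?dot_gt0 ?root_neq0 // dotC.
have -> : v - v *m mprod (t :: s) = (v - v *m t) + (v *m t - v *m t *m mprod s).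
  by rewrite /mprod /= mulmxA addrA subrK.
rewrite dotDl => sum_le; have vt_neg : dot (v *m t - v *m t *m mprod s) f < 0 by lra.
have s_ne : s != [::].
  by apply: contraTneq vt_neg => ->; rewrite /mprod /= mulmx1 subrr dot0l ltxx.
have [p [t' [q [-> le0]]]] := IH (v *m t) s_refl s_ne (ltW vt_neg).
by exists (t :: p), t', q; rewrite /= tE -dot_refl_mx -tE.
Qed.

Lemma sign_change s : reflections s -> mprod s = 1%:M -> s != [::] ->
  exists p tj m t q, [/\ s = p ++ tj :: m ++ t :: q,
    0 < dot f (ract m (pos_root t)) & dot f (ract m (pos_root t) *m tj) < 0].
Proof.
move=> s_refl s1 s_ne; have : dot (f - f *m mprod s) f <= 0 by rewrite s1 mulmx1 subrr dot0l.
move=> /(nonpositive_prefix s_refl s_ne)[p0 [t [q [s_eq p0_neg]]]].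
move: s_refl; rewrite s_eq => /forall_in_cat[p0_refl /forall_in_cons[t_refl _]].
have [bR fb _] := pos_rootP t_refl.
have [|p [tj [m [p0_eq fx fxtj]]]] :=
  @foldr_sign_change _ _ (fun w => 0 < dot f w) (fun t w => w *m t) _ p0 fb.
  by rewrite -leNgt.
move: p0_refl; rewrite p0_eq => /forall_in_cat[_ /forall_in_cons[[b' b'R tjE] m_refl]].
exists p, tj, m, t, q; split=> //; first by rewrite -catA.
rewrite lt_neqAle leNgt fxtj andbT f_generic // tjE.
exact/rs_refl/ract_root.
Qed.

Lemma descent_step s : reflections s -> mprod s = 1%:M -> s != [::] ->
  exists2 s', weyl_braid_equiv s s' &
    (exists p t q, s' = p ++ t :: t :: q) \/ (rank_code s' < rank_code s)%N.
Proof.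
move=> s_refl s1 s_ne; have [p [tj [m [t [q [s_eq fx fxtj]]]]]] := sign_change s_refl s1 s_ne.
move: s_refl; rewrite {1}s_eq => /forall_in_cat[_ /forall_in_cons[tj_refl]].
move=> /forall_in_cat[m_refl /forall_in_cons[t_refl _]].
have [bR _ tE] := pos_rootP t_refl; have [cR fc tjE] := pos_rootP tj_refl.
set b := pos_root t in bR fx fxtj tE; set c := pos_root tj in cR fc tjE.
set x := ract m b in fx fxtj; have xR : x \in rs := ract_root m_refl bR.
have zR : - (x *m tj) \in rs by rewrite tjE; apply/rootN/rs_refl.
have fz : 0 < dot f (- (x *m tj)) by rewrite dotNr oppr_gt0.
have slide : weyl_braid_equiv s (p ++ tj :: refl_mx x :: m ++ q).
  by have := weyl_braid_slide (rcons p tj) q bR m_refl; rewrite -tE -cats1 -!catA s_eq.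
have code_lt a : weyl_reflection rs a -> height f (pos_root a) < height f c ->
    forall t', (rank_code (p ++ a :: t' :: m ++ q) < rank_code s)%N.
  move=> a_refl lt t'; rewrite s_eq; apply: lexcode_ltl; first exact: rank_lt_size.
    by rewrite /= !size_cat addnS.
  exact: rank_lt.
(* The braid moves on (s_c, s_x) put s_x, resp. s_(x s_c), in the place of s_c. *)
have [hx | hx] := ltP (height f x) (height f c).
  exists (p ++ refl_mx x :: invmx (refl_mx x) *m tj *m refl_mx x :: m ++ q).
    by apply: braid_equiv_trans slide _; apply: weyl_braid_r.
  by right; apply: code_lt; [exists x | rewrite pos_root_refl].
have [hz | hz] := ltP (height f (- (x *m tj))) (height f c).
  exists (p ++ tj *m refl_mx x *m invmx tj :: tj :: m ++ q).
    by apply: braid_equiv_trans slide _; apply: weyl_braid_l.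
  have -> : tj *m refl_mx x *m invmx tj = refl_mx (- (x *m tj)).
    by rewrite tjE invmx_involutive (refl_mxK, refl_mx_conj) ?refl_mxN ?root_neq0.
  by right; apply: code_lt; [exists (- (x *m tj)) | rewrite pos_root_refl].
have x_c : x = c by move: hz; rewrite tjE; apply: height_refl_eq.
exists (p ++ tj :: refl_mx x :: m ++ q) => //; left.
by exists p, tj, (m ++ q); rewrite x_c -tjE.
Qed.

Lemma weyl_braid_repeated_pair s : reflections s -> mprod s = 1%:M -> s != [::] ->
  exists2 s', weyl_braid_equiv s s' & exists p t q, s' = p ++ t :: t :: q.
Proof.
move: {2}(rank_code s).+1 (ltnSn (rank_code s)) => n.
elim: n s => // n IH s lt_s s_refl s1 s_ne.
have [s' ss' [repeated | lt_s']] := descent_step s_refl s1 s_ne; first by exists s'.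
have [s'_refl] := weyl_braid_reflections ss' s_refl; rewrite s1 => s'1.
have s'_ne : s' != [::] by rewrite -size_eq0 (braid_equiv_size ss') size_eq0.
have [|s''] := IH s' _ s'_refl s'1 s'_ne; first exact: leq_trans lt_s' lt_s.
by move=> /(braid_equiv_trans ss'); exists s''.
Qed.

End PositiveRoots.

Lemma weyl_braid_front_pair s : reflections s -> mprod s = 1%:M -> s != [::] ->
  exists t q, weyl_braid_equiv s (t :: t :: q).
Proof.
move=> s_refl s1 s_ne; have [f f_generic] := exists_nonorthogonal rs_neq0.
have [s' ss' [p [t [q s'E]]]] := weyl_braid_repeated_pair f_generic s_refl s1 s_ne.
have [s'_refl _] := weyl_braid_reflections ss' s_refl.
have t_refl : weyl_reflection rs t by apply: s'_refl; rewrite s'E mem_cat mem_head orbT.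
exists t, (p ++ q); apply: braid_equiv_trans ss' _; rewrite s'E.
exact: (weyl_braid_pair_left [::] p q (weyl_reflectionK t_refl)).
Qed.

End RootSystem.
End WeylBraids.

Theorem proposition2p2 (R : realType) (d : nat) (rs : seq 'rV[R]_d) (n : nat)
    (ts : seq 'M[R]_d) :
  reduced_root_system rs ->
  (0 < n)%N -> size ts = n ->
  (forall t, t \in ts -> weyl_reflection rs t) ->
  mprod ts = 1%:M ->
  exists ts' : seq 'M[R]_d,
    [/\ weyl_braid_equiv ts ts',
        size ts' = n,
        (forall t, t \in ts' -> weyl_reflection rs t),
        mprod ts' = 1%:M
      & exists (t : 'M[R]_d) (rest : seq 'M[R]_d), ts' = t :: t :: rest].
Proof.
move=> [[_ rs_neq0 _] [rs_refl _ rs_reduced]] n_gt0 size_ts ts_refl ts1.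
have ts_ne : ts != [::] by rewrite -size_eq0 size_ts -lt0n.
have [t [q ts_tt]] := weyl_braid_front_pair rs_neq0 rs_refl rs_reduced ts_refl ts1 ts_ne.
have [tt_refl tt1] := weyl_braid_reflections rs_neq0 rs_refl ts_tt ts_refl.
exists (t :: t :: q); split=> //.
- by rewrite (braid_equiv_size ts_tt).
- by rewrite tt1.
- by exists t, q.
Qed.
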